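(* Let $(X,d)$ be a complete metric space and let $u:X\to\mathbb{R}\cup\{+\infty\}$ be a proper, lower semicontinuous function that is bounded from below. Then there is a sequence $\{z_n\}_{n\in\mathbb{N}}\subset X$ such that \[\lim_{n\to\infty}G[u](z_n)=0\quad\text{and}\quad \sum_{n=0}^{\infty}G[u](z_n)\,d(z_n,z_{n+1})<+\infty.\]
   Context: For a function $u:X\to\mathbb{R}\cup\{+\infty\}$ on a metric space $(X,d)$, the global slope is $G[u](x)=\sup_{y\neq x}\frac{(u(x)-u(y))_+}{d(x,y)}$ if $u(x)<+\infty$ and $G[u](x)=+\infty$ otherwise, where $\alpha_+=\max\{\alpha,0\}$. A function is proper if it is not identically $+\infty$. *)

From HB Require Import structures.
From mathcomp Require Import all_boot all_order all_algebra.
From mathcomp Require Import all_classical all_reals all_analysis.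
Set Implicit Arguments. Unset Strict Implicit. Unset Printing Implicit Defensive.
Import Order.TTheory GRing.Theory Num.Theory.
Local Open Scope classical_set_scope.
Local Open Scope ring_scope.

Definition is_metric (R : realType) (X : Type) (d : X -> X -> R) : Prop :=
  [/\ (forall x y, 0 <= d x y),
      (forall x y, d x y = 0 <-> x = y),
      (forall x y, d x y = d y x) &
      (forall x y z, d x z <= d x y + d y z)].

Definition cauchy_seq (R : realType) (X : Type) (d : X -> X -> R)
  (s : nat -> X) : Prop :=
  forall e : R, 0 < e -> exists N : nat, forall m n : nat,
    (N <= m)%N -> (N <= n)%N -> d (s m) (s n) < e.

Definition converges_to (R : realType) (X : Type) (d : X -> X -> R)
  (s : nat -> X) (x : X) : Prop :=
  forall e : R, 0 < e -> exists N : nat, forall n : nat,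
    (N <= n)%N -> d (s n) x < e.

Definition complete_metric (R : realType) (X : Type) (d : X -> X -> R) : Prop :=
  forall s : nat -> X, cauchy_seq d s -> exists x : X, converges_to d s x.

(* u : X -> R ∪ {+oo} is encoded as u : X -> \bar R never taking -oo. *)
Definition never_minfty (R : realType) (X : Type) (u : X -> \bar R) : Prop :=
  forall x, u x != -oo%E.

Definition proper_fun (R : realType) (X : Type) (u : X -> \bar R) : Prop :=
  exists x, u x != +oo%E.

Definition bounded_below (R : realType) (X : Type) (u : X -> \bar R) : Prop :=
  exists m : R, forall x, (m%:E <= u x)%E.

Definition lsc (R : realType) (X : Type) (d : X -> X -> R) (u : X -> \bar R) : Prop :=
  forall (x : X) (r : \bar R), (r < u x)%E ->
    exists delta : R, 0 < delta /\ forall y, d x y < delta -> (r < u y)%E.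

(* global slope G[u](x) = sup_{y <> x} (u x - u y)_+ / d(x,y) if u x < +oo,
   and +oo otherwise. 0 is adjoined to the set (harmless since all terms
   are >= 0) so that the sup over an empty index set is 0. *)
Definition global_slope (R : realType) (X : Type) (d : X -> X -> R)
  (u : X -> \bar R) (x : X) : \bar R :=
  if u x == +oo%E then +oo%E
  else ereal_sup ([set 0%E] `|`
         [set (maxe (u x - u y) 0 * ((d x y)^-1)%:E)%E | y in [set y | y <> x]]).

From mathcomp Require Import all_boot all_order all_algebra.
From mathcomp Require Import all_classical all_reals all_analysis.
From mathcomp Require Import lra.
Import Order.TTheory GRing.Theory Num.Theory.
Local Open Scope classical_set_scope.
Local Open Scope ring_scope.

(* Ekeland's principle: for e > 0 and u x finite, iterating near-minimisations of u
   over the nested closed sets {y | u y + e d(x, y) <= u x} produces a Cauchy sequence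
   whose limit xb satisfies u xb + e d(x, xb) <= u x and u y + e d(xb, y) > u xb for
   every y <> xb; such an xb has global slope at most e.  Starting from a point where
   u is finite and applying the principle with e = 1/(n+2) at the n-th point gives
   z_{n+1} with G(z_{n+1}) <= 1/(n+2) and
   G(z_n) d(z_n, z_{n+1}) <= d(z_n, z_{n+1}) / (n+1) <= 2 (u z_n - u z_{n+1}),
   so the series telescopes and is bounded by 2 (u z_0 - inf u). *)

Lemma exists_harmonic_lt {R : archiRealFieldType} (e : R) :
  0 < e -> exists n, harmonic n < e.
Proof.
move=> e_gt0; have [N _ /(_ N (leqnn N))] := near_infty_natSinv_lt (PosNum e_gt0).
by exists N.
Qed.

Lemma harmonic_le_twice_harmonicS (R : numFieldType) n :
  harmonic n <= 2 * harmonic n.+1 :> R.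
Proof.
rewrite /= -[X in X <= _]div1r ler_pdivrMr // mulrAC ler_pdivlMr // mul1r.
by rewrite -natrM ler_nat mul2n -addnn -addn1 leq_add2l.
Qed.

Lemma nneseries_telescope_lt_pinfty (R : realType) (F : (\bar R)^nat) (v : R^nat) m :
  (forall n, (0 <= F n)%E) -> (forall n, (F n <= (v n - v n.+1)%:E)%E) ->
  (forall n, m <= v n) -> (\sum_(0 <= n <oo) F n < +oo)%E.
Proof.
move=> F_ge0 F_le v_ge.
apply: (@le_lt_trans _ _ (v 0%N - m)%:E); last exact: ltry.
apply: lime_le; first exact: is_cvg_nneseries.
apply: nearW => n; apply: (@le_trans _ _ (\sum_(0 <= i < n) (v i - v i.+1)%:E)%E).
  by apply: lee_sum => i _; exact: F_le.
rewrite sumEFin lee_fin.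
have -> : \sum_(0 <= i < n) (v i - v i.+1) = v 0%N - v n.
  by rewrite -opprB -telescope_sumr // -sumrN; apply: eq_bigr => i _; rewrite opprB.
by rewrite lerD2l lerN2.
Qed.

Lemma dependent_choice_nat {T : Type} (P : T -> Prop) (Q : nat -> T -> T -> Prop)
    {x0 : T} :
  P x0 -> (forall n x, P x -> exists2 y, P y & Q n x y) ->
  exists2 a : nat -> T, a 0%N = x0 & forall n, P (a n) /\ Q n (a n) (a n.+1).
Proof.
move=> Px0 step.
have step_total (p : nat * T) : exists y, P p.2 -> P y /\ Q p.1 p.2 y.
  case: p => n x /=; have [Px|] := pselect (P x); last by exists x.
  by have [y Py Qy] := step n x Px; exists y.
have [f f_step] := choice step_total.
pose a := fix a n := if n is k.+1 then f (k, a k) else x0.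
have Pa n : P (a n) by elim: n => // n ih; exact: (f_step (n, a n) ih).1.
by exists a => // n; split; [exact: Pa | exact: (f_step (n, a n) (Pa n)).2].
Qed.

Section Ekeland.
Context {R : realType} {X : Type} (d : X -> X -> R) (u : X -> \bar R).
Hypotheses (d_metric : is_metric d) (u_neqNy : never_minfty u).

Let d_ge0 x y : 0 <= d x y. Proof. by case: d_metric. Qed.
Let d_eq0 x y : d x y = 0 <-> x = y. Proof. by case: d_metric. Qed.
Let d_sym x y : d x y = d y x. Proof. by case: d_metric. Qed.
Let d_triangle x y z : d x z <= d x y + d y z. Proof. by case: d_metric. Qed.

Definition ekeland_le (e : R) (x y : X) : Prop := (u y + (e * d x y)%:E <= u x)%E.

Definition ekeland_minimal (e : R) (x : X) : Prop :=
  forall y, ekeland_le e x y -> y = x.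

Lemma ekeland_le_refl e x : ekeland_le e x x.
Proof. by rewrite /ekeland_le (d_eq0 x x).2 // mulr0 adde0. Qed.

Lemma ekeland_leP {e x y} : u x \is a fin_num ->
  ekeland_le e x y <-> u y \is a fin_num /\ fine (u y) + e * d x y <= fine (u x).
Proof.
rewrite /ekeland_le => /fineK <-; have := u_neqNy y.
by case: (u y) => [r| |] //= _; rewrite -lee_fin EFinD; split=> [|[]].
Qed.

Lemma ekeland_le_trans {e x y z} : 0 <= e -> u x \is a fin_num ->
  ekeland_le e x y -> ekeland_le e y z -> ekeland_le e x z.
Proof.
move=> e_ge0 ux_fin /(ekeland_leP ux_fin)[uy_fin xy] /(ekeland_leP uy_fin)[uz_fin yz].
apply/(ekeland_leP ux_fin); split => //.
have : e * d x z <= e * d x y + e * d y z by rewrite -mulrDr ler_wpM2l.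
lra.
Qed.

Lemma ekeland_le_dist {e r y z} : 0 < e -> u y \is a fin_num ->
  ekeland_le e y z -> (u y <= u z + r%:E)%E -> d y z <= r / e.
Proof.
move=> e_gt0 uy_fin /(ekeland_leP uy_fin)[uz_fin yz].
rewrite -(fineK uy_fin) -(fineK uz_fin) -EFinD lee_fin => y_near_min.
by rewrite ler_pdivlMr // mulrC; lra.
Qed.

Lemma cauchy_seq_harmonic (s : nat -> X) :
  (forall n k, d (s n.+1) (s (n.+1 + k)%N) <= harmonic n) -> cauchy_seq d s.
Proof.
move=> s_close e e_gt0.
have [N hN] : exists N, harmonic N < e / 2.
  by apply: exists_harmonic_lt; rewrite divr_gt0.
exists N.+1 => p q /subnKC <- /subnKC <-.
apply: (le_lt_trans (d_triangle _ (s N.+1) _)); rewrite d_sym.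
have := s_close N (p - N.+1)%N; have := s_close N (q - N.+1)%N; lra.
Qed.

Hypothesis u_lsc : lsc d u.

Lemma ekeland_le_closed {e x s l N} : 0 < e -> u x \is a fin_num ->
  converges_to d s l -> (forall n, (N <= n)%N -> ekeland_le e x (s n)) ->
  ekeland_le e x l.
Proof.
move=> e_gt0 ux_fin s_to_l s_le; have [//|not_le] := pselect (ekeland_le e x l).
exfalso; set g := fine (u x) - e * d x l.
have [t g_lt_t t_lt_ul] : exists2 t, g < t & (t%:E < u l)%E.
  move: not_le; rewrite (ekeland_leP ux_fin); have := u_neqNy l.
  case: (u l) => [r| |] // _ not_le; last by exists (g + 1); [lra | rewrite ltry].
  have g_lt_r : g < r.
    rewrite ltNge; apply/negP => r_le_g; apply: not_le; split => //=.
    by rewrite /g in r_le_g; lra.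
  by exists ((g + r) / 2); rewrite ?lte_fin; lra.
have [delta [delta_gt0 u_gt_t]] := u_lsc _ _ t_lt_ul.
have radius_gt0 : 0 < Num.min delta ((t - g) / e).
  by rewrite lt_min delta_gt0 /= divr_gt0 // subr_gt0.
have [M hM] := s_to_l _ radius_gt0.
set n := maxn N M.
have := hM n (leq_maxr _ _); rewrite lt_min => /andP[n_near n_close].
have [usn_fin sn_le] := (ekeland_leP ux_fin).1 (s_le n (leq_maxl _ _)).
have : t < fine (u (s n)) by rewrite -lte_fin fineK //; apply: u_gt_t; rewrite d_sym.
have : e * d x l <= e * d x (s n) + e * d (s n) l.
  by rewrite -mulrDr ler_wpM2l ?d_triangle // ltW.
rewrite ltr_pdivlMr // mulrC /g in n_close g_lt_t; lra.
Qed.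

Hypothesis u_bdd : bounded_below u.

Lemma ekeland_le_near_inf e x {r} : 0 < r -> u x \is a fin_num ->
  exists2 y, ekeland_le e x y &
    forall z, ekeland_le e x z -> (u y <= u z + r%:E)%E.
Proof.
move=> r_gt0 ux_fin; set I := ereal_inf [set u z | z in ekeland_le e x].
have I_fin : I \is a fin_num.
  have [m u_ge_m] := u_bdd; rewrite fin_numElt; apply/andP; split.
    apply: (@lt_le_trans _ _ m%:E); first by rewrite ltNyr.
    by apply: le_ereal_inf_tmp => _ [z _ <-].
  apply: (@le_lt_trans _ _ (u x)).
    by apply: ereal_inf_lbound; exists x => //; exact: ekeland_le_refl.
  by move: ux_fin; rewrite fin_numElt => /andP[].
have [_ [y xy <-] uy_lt] := lb_ereal_inf_adherent r_gt0 I_fin.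
exists y => // z xz; apply: (le_trans (ltW uy_lt)); apply: leeD2r.
by apply: ereal_inf_lbound; exists z.
Qed.

Lemma ekeland_sequence {e x} : 0 < e -> u x \is a fin_num ->
  exists2 a : nat -> X, a 0%N = x & forall n, u (a n) \is a fin_num /\
    ekeland_le e (a n) (a n.+1) /\
    forall z, ekeland_le e (a n) z -> (u (a n.+1) <= u z + (e * harmonic n)%:E)%E.
Proof.
move=> e_gt0 ux_fin; apply: (dependent_choice_nat (fun y => u y \is a fin_num)
  (fun n y y' => ekeland_le e y y' /\
     forall z, ekeland_le e y z -> (u y' <= u z + (e * harmonic n)%:E)%E)) ux_fin _.
move=> n y uy_fin.
have [y' yy' y'_near_inf] :=
  ekeland_le_near_inf e y (mulr_gt0 e_gt0 (harmonic_gt0 n)) uy_fin.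
by exists y'; first exact: ((ekeland_leP uy_fin).1 yy').1.
Qed.

Hypothesis d_complete : complete_metric d.

Theorem ekeland_variational_principle {e x} : 0 < e -> u x \is a fin_num ->
  exists2 xb, ekeland_le e x xb & ekeland_minimal e xb.
Proof.
move=> e_gt0 ux_fin; have [a a0 a_step] := ekeland_sequence e_gt0 ux_fin.
have a_fin n : u (a n) \is a fin_num by have [] := a_step n.
have a_le n k : ekeland_le e (a n) (a (n + k)%N).
  elim: k => [|k ih]; first by rewrite addn0; exact: ekeland_le_refl.
  rewrite addnS; apply: ekeland_le_trans (ltW e_gt0) (a_fin n) ih _.
  by have [_ []] := a_step (n + k)%N.
have a_diam n y : ekeland_le e (a n.+1) y -> d (a n.+1) y <= harmonic n.
  move=> any; have [_ [an_le near_inf]] := a_step n.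
  have := ekeland_le_dist e_gt0 (a_fin n.+1) any
    (near_inf y (ekeland_le_trans (ltW e_gt0) (a_fin n) an_le any)).
  by rewrite mulrC mulKf ?gt_eqF.
have [xb a_to_xb] :=
  d_complete _ (cauchy_seq_harmonic a (fun n k => a_diam n _ (a_le n.+1 k))).
have xb_le n : ekeland_le e (a n) xb.
  apply: (ekeland_le_closed (N := n) e_gt0 (a_fin n) a_to_xb) => m /subnKC <-.
  exact: a_le.
exists xb; first by rewrite -a0.
move=> y xb_y; have d_small n : d xb y <= 2 * harmonic n.
  have := a_diam n _ (xb_le n.+1).
  have := a_diam n _ (ekeland_le_trans (ltW e_gt0) (a_fin n.+1) (xb_le n.+1) xb_y).
  have := d_triangle xb (a n.+1) y; rewrite (d_sym xb (a n.+1)); lra.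
apply/esym/d_eq0/eqP; rewrite eq_le d_ge0 andbT; apply/ler_addgt0Pr => r r_gt0.
have [n hn] : exists n, harmonic n < r / 2.
  by apply: exists_harmonic_lt; rewrite divr_gt0.
by have := d_small n; lra.
Qed.

Lemma global_slope_ge0 x : (0 <= global_slope d u x)%E.
Proof.
rewrite /global_slope; case: ifP => _; first by rewrite leey.
by apply: ereal_sup_ubound; left.
Qed.

Lemma ekeland_minimal_global_slope_le e x : 0 <= e -> u x \is a fin_num ->
  ekeland_minimal e x -> (global_slope d u x <= e%:E)%E.
Proof.
move=> e_ge0 ux_fin x_min; rewrite /global_slope.
have -> : (u x == +oo%E) = false by move: ux_fin; rewrite fin_numE => /andP[_ /negbTE].
apply: ge_ereal_sup => _ [->|[y y_neq_x <-]]; first by rewrite lee_fin.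
have dxy_gt0 : 0 < d x y.
  by rewrite lt_neqAle d_ge0 andbT eq_sym; apply/eqP => /d_eq0 /esym.
have : ~ ekeland_le e x y by move=> /x_min.
rewrite (ekeland_leP ux_fin) -(fineK ux_fin); have := u_neqNy y.
case: (u y) => [r| |] // _ /= not_le; last by rewrite addeNy maxNye mul0e lee_fin.
rewrite lee_pdivrMr // -EFinB -EFinM ge_max !lee_fin mulr_ge0 ?(ltW dxy_gt0) //.
by rewrite andbT leNgt; apply/negP => lt; apply: not_le; split => //; lra.
Qed.

Lemma global_slope_mul_dist_le {n x y} : u x \is a fin_num ->
  (global_slope d u x <= (harmonic n)%:E)%E -> ekeland_le (harmonic n.+1) x y ->
  (global_slope d u x * (d x y)%:E <= (2 * fine (u x) - 2 * fine (u y))%:E)%E.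
Proof.
move=> ux_fin x_slope /(ekeland_leP ux_fin)[_ xy].
apply: (le_trans (lee_wpmul2r _ x_slope)); first by rewrite lee_fin.
rewrite -EFinM lee_fin.
have : harmonic n * d x y <= 2 * harmonic n.+1 * d x y.
  by rewrite ler_wpM2r // harmonic_le_twice_harmonicS.
lra.
Qed.

Lemma ekeland_small_slope {e x} : 0 < e -> u x \is a fin_num ->
  exists2 y, ekeland_le e x y & (global_slope d u y <= e%:E)%E.
Proof.
move=> e_gt0 ux_fin; have [y xy y_min] := ekeland_variational_principle e_gt0 ux_fin.
exists y => //; apply: ekeland_minimal_global_slope_le (ltW e_gt0) _ y_min.
exact: ((ekeland_leP ux_fin).1 xy).1.
Qed.

Hypothesis u_proper : proper_fun u.

Lemma small_slope_sequence : exists z : nat -> X, forall n,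
  [/\ u (z n) \is a fin_num, (global_slope d u (z n) <= (harmonic n)%:E)%E &
      ekeland_le (harmonic n.+1) (z n) (z n.+1)].
Proof.
have [p up_fin] : exists p, u p \is a fin_num.
  by have [p up] := u_proper; exists p; rewrite fin_numE up andbT u_neqNy.
have [z0 pz0 z0_slope] := ekeland_small_slope (harmonic_gt0 0) up_fin.
have step n y : u y \is a fin_num -> exists2 y', u y' \is a fin_num &
    ekeland_le (harmonic n.+1) y y' /\ (global_slope d u y' <= (harmonic n.+1)%:E)%E.
  move=> uy_fin.
  have [y' yy' y'_slope] := ekeland_small_slope (harmonic_gt0 n.+1) uy_fin.
  by exists y' => //; exact: ((ekeland_leP uy_fin).1 yy').1.
have [z z0E z_step] := dependent_choice_nat (fun y => u y \is a fin_num) _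
  ((ekeland_leP up_fin).1 pz0).1 step.
exists z => n; have [zn_fin [zn_le _]] := z_step n; split => //.
by case: n {zn_fin zn_le} => [|n]; [rewrite z0E | have [_ []] := z_step n].
Qed.

End Ekeland.

Theorem proposition2p4 (R : realType) (X : Type) (d : X -> X -> R)
  (hd : is_metric d) (hc : complete_metric d)
  (u : X -> \bar R) (hu_fin : never_minfty u) (hu_proper : proper_fun u)
  (hu_lsc : lsc d u) (hu_bdd : bounded_below u) :
  exists z : nat -> X,
    (fun n => global_slope d u (z n)) @ \oo --> 0%E /\
    (\sum_(0 <= n <oo) (global_slope d u (z n) * (d (z n) (z n.+1))%:E) < +oo)%E.
Proof.
have [z z_prop] := small_slope_sequence d u hd hu_fin hu_lsc hu_bdd hc hu_proper.
exists z; split.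
  apply: (@squeeze_cvge _ _ _ _ (cst 0%E) _ (EFin \o harmonic)).
  - by apply: nearW => n; rewrite global_slope_ge0 /=; have [] := z_prop n.
  - exact: cvg_cst.
  - exact: cvge_harmonic.
have [m u_ge_m] := hu_bdd.
apply: (nneseries_telescope_lt_pinfty _ _ (fun n => 2 * fine (u (z n))) (2 * m)).
- by move=> n; rewrite mule_ge0 ?global_slope_ge0 // lee_fin; case: hd.
- move=> n /=; have [zn_fin zn_slope zn_le] := z_prop n.
  exact: (global_slope_mul_dist_le d u hd hu_fin zn_fin zn_slope zn_le).
- by move=> n; have [zn_fin _ _] := z_prop n; rewrite ler_pM2l // -lee_fin fineK.
Qed.
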